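(* Let $T$ be a ditree and let $S$ be a source set or a sink set of $T$ with $|S|\ge 2$ that contains no leaf of $T$. Suppose $M$ is a minimum-size geodetic set of $T$ with $|M\cap S|=1$, say $M\cap S=\{u\}$. For any $w\in S$, the set $N=(M\setminus\{u\})\cup\{w\}$ is also a minimum-size geodetic set of $T$.
   Context: All digraphs are finite, without loops or parallel arcs. The underlying undirected graph of a digraph is obtained by forgetting orientations and deleting parallel edges. A ditree is a digraph whose underlying undirected graph is a tree (it may contain $2$-cycles, i.e., pairs of opposite arcs $uv,vu$). A leaf is a vertex of degree $1$ in the underlying undirected graph. For $S\subseteq V(D)$, $N^-(S)$ (resp. $N^+(S)$) is the set of vertices outside $S$ having an arc to (resp. from) some vertex of $S$. A source set is a maximal strongly connected component $S$ with $N^-(S)\setminus S=\emptyset$; a sink set is a maximal strongly connected component $S$ with $N^+(S)\setminus S=\emptyset$. For vertices $u,v$, $I(u,v)$ is the set of vertices on some shortest directed path from $u$ to $v$; for $S\subseteq V(D)$, $I(S)=\bigcup_{u,v\in S}(I(u,v)\cup I(v,u))$. A geodetic set is a set $S$ with $I(S)=V(D)$. *)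

From mathcomp Require Import all_boot.
Set Implicit Arguments. Unset Strict Implicit. Unset Printing Implicit Defensive.

(* A digraph on a finite vertex type T is an irreflexive relation e : rel T
   (e u v = there is an arc u -> v). Loops are excluded by irreflexivity,
   parallel arcs cannot occur. *)

Section Digraph.
Variables (T : finType) (e : rel T).

Definition loopless : Prop := irreflexive e.

Definition uadj : rel T := fun u v => e u v || e v u.

Definition uconnected : Prop := forall u v : T, connect uadj u v.

Definition ucycle_seq (c : seq T) : Prop :=
  [/\ 3 <= size c, uniq c & cycle uadj c].

Definition uacyclic : Prop := forall c : seq T, ~ ucycle_seq c.

Definition ditree : Prop := [/\ 0 < #|T|, uconnected & uacyclic].

Definition udeg (v : T) : nat := #|[set x | uadj v x]|.
Definition leaf (v : T) : Prop := udeg v = 1.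

Definition strong_comp (S : {set T}) : Prop :=
  [/\ S != set0,
      {in S &, forall u v, connect e u v} &
      forall x u, u \in S -> connect e x u -> connect e u x -> x \in S].

Definition in_nbhd (S : {set T}) : {set T} :=
  [set x | (x \notin S) && [exists y in S, e x y]].
Definition out_nbhd (S : {set T}) : {set T} :=
  [set x | (x \notin S) && [exists y in S, e y x]].

Definition source_set (S : {set T}) : Prop :=
  strong_comp S /\ in_nbhd S :\: S = set0.
Definition sink_set (S : {set T}) : Prop :=
  strong_comp S /\ out_nbhd S :\: S = set0.

(* directed walks u = x0 -> x1 -> ... -> v, given as the list p of
   vertices after u; its length is size p *)
Definition dwalk (u v : T) (p : seq T) : bool := path e u p && (last u p == v).

Definition shortest_dpath (u v : T) (p : seq T) : Prop :=
  dwalk u v p /\ forall q, dwalk u v q -> size p <= size q.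

Definition in_interval (u v x : T) : Prop :=
  exists p, shortest_dpath u v p /\ x \in u :: p.

Definition in_intervalS (S : {set T}) (x : T) : Prop :=
  exists u v, [/\ u \in S, v \in S & in_interval u v x \/ in_interval v u x].

Definition geodetic (S : {set T}) : Prop := forall x : T, in_intervalS S x.

Definition min_geodetic (M : {set T}) : Prop :=
  geodetic M /\ forall M' : {set T}, geodetic M' -> #|M| <= #|M'|.

End Digraph.

From mathcomp Require Import all_boot zify.
Set Implicit Arguments. Unset Strict Implicit. Unset Printing Implicit Defensive.

(* In a ditree the vertex set of any directed walk from [a] to [b] contains the
   unique undirected path from [a] to [b]; hence, when [b] is reachable from
   [a], that tree path lies in I(a, b).  Let [S] be a source set (the sink case
   follows by reversing every arc).  No arc enters [S], so everything reachable
   from outside [S] stays outside [S].  A vertex [x] outside [S] lies on a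
   geodesic between vertices [a], [b] of [M] with [b] outside [S]; if [a = u],
   the walk from [w] to [u] followed by this geodesic still carries the tree
   path through [x].  A vertex [x] of [S] lies on a path from [w] that stays in
   [S] until, [S] having no leaf, it must leave [S] by an arc [l -> t]; a
   geodesic of [M] through [t] ends outside [S] at some [b], and the tree path
   from [w] to [b] passes through [x]. *)

Section Paths.
Variables (T : finType) (e : rel T).

Lemma uadj_sym : symmetric (uadj e).
Proof. by move=> x y; rewrite /uadj orbC. Qed.

Lemma sub_uadj : subrel e (uadj e).
Proof. by move=> x y exy; rewrite /uadj exy. Qed.

Lemma connect_last x p z : path e x p -> z \in x :: p -> connect e z (last x p).
Proof.
move=> pP zp; move: pP; case/splitPl: zp => p1 p2 <-.
rewrite cat_path last_cat => /andP[_ p2P].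
by apply/connectP; exists p2.
Qed.

Lemma path_suffix x p t : path e x p -> uniq (x :: p) -> t \in x :: p ->
  exists2 s, path e t s & uniq (t :: s) /\ last t s = last x p.
Proof.
move=> pP pU tp; move: pP pU; case/splitPl: tp => p1 p2 p1t.
rewrite cat_path last_cat p1t -cat_cons cat_uniq => /andP[_ p2P] /and3P[_ p1p2 p2U].
exists p2 => //; split=> //=; rewrite p2U andbT.
by apply: contra p1p2 => tp2; apply/hasP; exists t; rewrite // -p1t mem_last.
Qed.

Lemma uniq_dpath_exists x y : connect e x y ->
  exists p, [/\ path e x p, uniq (x :: p) & last x p = y].
Proof. by case/connectP=> p /shortenP[p' p'P p'U _] ->; exists p'. Qed.

Lemma shortest_dpath_exists a b : connect e a b -> exists p, shortest_dpath e a b p.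
Proof.
case/connectP=> p0 p0P p0b.
have : exists n, [exists q : n.-tuple T, dwalk e a b q].
  by exists (size p0); apply/existsP; exists (in_tuple p0); rewrite /dwalk p0P -p0b eqxx.
case/ex_minnP=> n /existsP[q qw] qmin; exists q; split=> // r rw.
by rewrite size_tuple; apply: qmin; apply/existsP; exists (in_tuple r).
Qed.

Lemma shortest_dpath_uniq a b p : shortest_dpath e a b p -> uniq (a :: p).
Proof.
case=> /andP[pP /eqP] + pmin; case: (shortenP pP) => p' p'P p'U p'p p'b.
have := pmin p'; rewrite /dwalk p'P p'b eqxx => /(_ isT) p_le.
apply: (leq_size_uniq (s2 := a :: p) p'U) p_le => z; rewrite !inE => /orP[->//|/p'p ->].
by rewrite orbT.
Qed.

Lemma geodetic_oriented (M : {set T}) x : geodetic e M ->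
  exists a b, [/\ a \in M, b \in M & in_interval e a b x].
Proof. by move/(_ x)=> [a [b [aM bM [ab|ba]]]]; [exists a, b | exists b, a]. Qed.

Lemma last_rev_belast (x : T) p : last (last x p) (rev (belast x p)) = x.
Proof. by case: p => [|y p] //=; rewrite rev_cons last_rcons. Qed.

Lemma dwalk_rev a b p : dwalk e a b p -> dwalk (fun x y => e y x) b a (rev (belast a p)).
Proof. by case/andP=> pP /eqP <-; rewrite /dwalk rev_path pP last_rev_belast eqxx. Qed.

Lemma other_neighbour v y : ~ leaf e v -> uadj e v y -> exists2 t, uadj e v t & t != y.
Proof.
move=> vnl vy; case: (pickP [pred t | uadj e v t & t != y]) => [t /andP[]|none].
  by exists t.
case: vnl; rewrite /leaf /udeg -(cards1 y).
suff -> : [set t | uadj e v t] = [set y] by [].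
apply/setP=> t; rewrite !inE; apply/idP/eqP=> [vt|->//]; apply/eqP/negPn.
by move: (none t); rewrite /= vt /= => ->.
Qed.

End Paths.

Section Forest.
Variables (T : finType) (e : rel T).
Hypothesis acyc : uacyclic e.

Lemma disjoint_upaths_nil x y p q :
  path (uadj e) x (rcons p y) -> path (uadj e) x (rcons q y) ->
  uniq (x :: rcons p y) -> uniq (x :: rcons q y) -> ~~ has (mem q) p ->
  p = [::] /\ q = [::].
Proof.
move=> pP qP pU qU pq.
have [|pq_nil] := boolP (size (p ++ q) == 0).
  by rewrite size_eq0; case: p {pP pU pq} => [|? ?]; case: q {qP qU} => [|? ?].
exfalso; apply: (acyc (c := x :: p ++ y :: rev q)); split.
- by move: pq_nil; rewrite /= !size_cat /= size_rev addnS !ltnS lt0n.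
- move: pU qU; rewrite !cons_uniq !mem_rcons !inE !rcons_uniq !negb_or.
  move=> /andP[/andP[xy xp] /andP[yp pU]] /andP[/andP[_ xq] /andP[yq qU]].
  rewrite mem_cat inE mem_rev !negb_or xp xy xq cat_uniq /= has_rev has_sym.
  by rewrite negb_or yp pq mem_rev yq pU rev_uniq qU.
- rewrite /cycle -cat_rcons rcons_cat cat_path last_rcons pP -rev_cons.
  rewrite -(belast_rcons x q y) -{1}(last_rcons x q y) rev_path.
  by rewrite (eq_path (e' := uadj e) (fun a b => uadj_sym e b a)).
Qed.

Lemma upath_unique x p q : path (uadj e) x p -> path (uadj e) x q ->
  uniq (x :: p) -> uniq (x :: q) -> last x p = last x q -> p = q.
Proof.
elim: p x q => [|a p IH] x q pP qP pU qU.
  case: q qP qU => [//|b q] _ /andP[xq _] /= xl.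
  by move: xq; rewrite xl mem_last.
case: q qP qU => [|b q] qP qU pq.
  by move: pU => /andP[]; rewrite -[x]/(last x [::]) -pq /= mem_last.
have [y [p1 [p2 [Ep yq p1q]]]] : exists y p1 p2,
    [/\ a :: p = rcons p1 y ++ p2, y \in b :: q & ~~ has (mem (b :: q)) p1].
  suff /split_find[y p1 p2 ? ?] : has (mem (b :: q)) (a :: p) by exists y, p1, p2.
  apply/hasP; exists (last a p); first exact: mem_last.
  by rewrite -[last a p]/(last x (a :: p)) pq /=; exact: mem_last.
have [q1 [q2 Eq]] : exists q1 q2, b :: q = rcons q1 y ++ q2.
  by case/splitPr: yq => q1 q2; exists q1, q2; rewrite cat_rcons.
have [p1_nil q1_nil] : p1 = [::] /\ q1 = [::].
  move: pP pU qP qU p1q; rewrite Ep Eq -!cat_cons !cat_path !cat_uniq.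
  move=> /andP[p1P _] /and3P[p1U _ _] /andP[q1P _] /and3P[q1U _ _] p1q.
  apply: disjoint_upaths_nil p1P q1P p1U q1U _.
  apply: contra p1q; apply: sub_has => z.
  by rewrite !inE mem_cat mem_rcons inE => ->; rewrite orbT.
move: Ep Eq; rewrite p1_nil q1_nil /= => -[<- _] Eq.
rewrite Eq; congr (_ :: _); apply: (IH a).
- by case/andP: pP.
- by move: qP; rewrite Eq => /andP[].
- by case/andP: pU.
- by move: qU; rewrite Eq => /andP[].
- by move: pq; rewrite Eq.
Qed.

Lemma upath_sub_walk x p q : path (uadj e) x p -> uniq (x :: p) ->
  path (uadj e) x q -> last x q = last x p -> {subset x :: p <= x :: q}.
Proof.
move=> pP pU qP; case: (shortenP qP) => q' q'P q'U q'q q'p.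
rewrite -(upath_unique q'P pP q'U pU q'p) => z; rewrite !inE => /orP[->//|/q'q ->].
by rewrite orbT.
Qed.

Lemma upath_sub_interval a p x : path (uadj e) a p -> uniq (a :: p) ->
  connect e a (last a p) -> x \in a :: p -> in_interval e a (last a p) x.
Proof.
move=> pP pU /shortest_dpath_exists[q qS] xp; exists q; split=> //.
have [/andP[qP /eqP qp] _] := qS.
exact: (upath_sub_walk pP pU (sub_path (@sub_uadj _ e) qP) qp).
Qed.

Lemma upath_back_edge w p l t : path (uadj e) w (rcons p l) -> uniq (w :: rcons p l) ->
  t \in w :: p -> uadj e l t -> t = last w p.
Proof.
move=> pP pU tp; move: pP pU; case/splitPl: tp => p1 p2 <-.
rewrite rcons_cat cat_path last_cat -cat_cons cat_uniq => /andP[_ p2P] /and3P[_ p1p2 p2U] lt.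
have tp2 : last w p1 \notin rcons p2 l.
  by apply: contra p1p2 => tp2; apply/hasP; exists (last w p1); rewrite ?mem_last.
suff -> : p2 = [::] by [].
apply: (proj1 (disjoint_upaths_nil (x := last w p1) (y := l) (q := [::]) p2P _ _ _ _)) => /=.
- by rewrite uadj_sym lt.
- by rewrite tp2 p2U.
- by rewrite inE andbT; apply: contra tp2 => /eqP->; rewrite mem_rcons mem_head.
- by apply/hasPn.
Qed.

Lemma upath_exit (S : {set T}) w p : loopless e -> {in S, forall v, ~ leaf e v} ->
  path (uadj e) w p -> uniq (w :: p) -> p != [::] -> {subset w :: p <= S} ->
  exists q t, [/\ path (uadj e) w (rcons (p ++ q) t), uniq (w :: rcons (p ++ q) t),
                 {subset w :: p ++ q <= S} & t \notin S].
Proof.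
move=> e_irr noleaf; move: {2}(#|T| - size p) (leqnn (#|T| - size p)) => n.
elim: n p => [|n IH] p bound pP pU.
  by have := max_card (mem (w :: p)); rewrite (card_uniqP pU) /= ltnNge -subn_eq0 -leqn0 bound.
case/lastP: p bound pP pU => [//|p l] bound pP pU _ pS.
have lS : l \in S by apply: pS; rewrite inE mem_rcons mem_head orbT.
have [t lt t_pred] : exists2 t, uadj e l t & t != last w p.
  by apply: other_neighbour (noleaf l lS) _; move: pP; rewrite rcons_path uadj_sym => /andP[].
have t_new : t \notin w :: rcons p l.
  have tl : t != l by apply: contraTneq lt => ->; rewrite /uadj e_irr.
  rewrite -rcons_cons mem_rcons inE (negbTE tl) /=.
  by apply: contra t_pred => tp; rewrite (upath_back_edge pP pU tp lt).
have pP' : path (uadj e) w (rcons (rcons p l) t) by rewrite rcons_path pP last_rcons.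
have pU' : uniq (w :: rcons (rcons p l) t) by rewrite -rcons_cons rcons_uniq t_new pU.
have [tS|tS] := boolP (t \in S); last by exists [::], t; rewrite cats0.
have [|||q [t' [qP qU qS t'S]]] := IH (rcons (rcons p l) t) _ pP' pU'.
- by rewrite size_rcons; lia.
- by rewrite -size_eq0 size_rcons.
- by move=> z; rewrite -rcons_cons mem_rcons inE => /orP[/eqP->//|]; apply: pS.
by exists (t :: q), t'; rewrite -cat_rcons.
Qed.
End Forest.

Section SourceExchange.
Variables (T : finType) (e : rel T) (S M : {set T}) (u w : T).
Hypotheses (e_irr : loopless e) (acyc : uacyclic e).
Hypotheses (S_strong : {in S &, forall x y, connect e x y})
  (S_no_in_arc : in_nbhd e S :\: S = set0) (S_noleaf : {in S, forall v, ~ leaf e v}).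
Hypotheses (geoM : geodetic e M) (MS : M :&: S = [set u]) (wS : w \in S).

Local Notation N := (w |: (M :\ u)).

Lemma arc_into_source x y : e x y -> y \in S -> x \in S.
Proof.
move=> exy yS; apply: contraT => xS.
have : x \in in_nbhd e S :\: S by rewrite !inE xS /=; apply/existsP; exists y; rewrite yS exy.
by rewrite S_no_in_arc inE.
Qed.

Lemma connect_into_source x y : connect e x y -> y \in S -> x \in S.
Proof.
case/connectP=> p + ->; elim: p x => [|z p IH] x //= /andP[exz zp] pS.
exact: arc_into_source exz (IH z zp pS).
Qed.

Let uS : u \in S. Proof. by have := set11 u; rewrite -MS => /setIP[]. Qed.

Let outside_mem b : b \in M -> b \notin S -> b \in N.
Proof.
move=> bM bS; rewrite !inE bM andbT; apply/orP; right.
by apply: contraNneq bS => ->; exact: uS.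
Qed.

Lemma exchange_interval_out x : x \notin S -> in_intervalS e N x.
Proof.
move=> xS; have [a [b [aM bM [P [Pshort xP]]]]] := geodetic_oriented x geoM.
have [/andP[PP /eqP Pb] _] := Pshort.
have bS : b \notin S.
  by apply: contra xS; apply: connect_into_source; rewrite -Pb; exact: connect_last PP xP.
have [au|au] := eqVneq a u; last first.
  exists a, b; split; [by rewrite !inE aM au orbT | exact: outside_mem | by left; exists P].
subst a; have /connectP[R RP Rw] := S_strong uS wS.
have [q qshort] : exists q, shortest_dpath e w b q.
  apply: shortest_dpath_exists; apply: connect_trans (S_strong wS uS) _.
  by rewrite -Pb; apply: (path_connect PP); exact: mem_last.
have [/andP[qP /eqP qb] _] := qshort.
have RqP : path (uadj e) u (R ++ q).
  by rewrite cat_path -Rw !(sub_path (@sub_uadj _ e)).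
(* [x] is on the tree path [u :: P], hence on the walk [u :: R ++ q], but not on
   [R], which lies in [S]. *)
have : x \in u :: R ++ q.
  apply: (upath_sub_walk acyc (sub_path (@sub_uadj _ e) PP) (shortest_dpath_uniq Pshort) RqP).
    by rewrite last_cat -Rw qb Pb.
  exact: xP.
rewrite -cat_cons mem_cat => /orP[xR|xq].
  by move: xS; rewrite (connect_into_source (connect_last RP xR)) // -Rw.
exists w, b; split; [exact: setU11 | exact: outside_mem | left].
by exists q; rewrite inE xq orbT.
Qed.

Lemma exchange_interval_in x : x \in S -> in_intervalS e N x.
Proof.
move=> xS; have [->|xw] := eqVneq x w.
  exists w, w; split; [exact: setU11 | exact: setU11 | left].
  exists [::]; split; last exact: mem_head.
  by split=> [|q _]; rewrite /dwalk ?eqxx.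
have [p [pP pU px]] := uniq_dpath_exists (S_strong wS xS).
have pS : {subset w :: p <= S}.
  by move=> z zp; apply: (connect_into_source (connect_last pP zp)); rewrite px.
have p_nil : p != [::] by apply: contraNneq xw => p0; rewrite -px p0.
have [q [t [qP qU qS tS]]] :=
  upath_exit acyc e_irr S_noleaf (sub_path (@sub_uadj _ e) pP) pU p_nil pS.
have lS : last w (p ++ q) \in S by apply: qS; exact: mem_last.
have elt : e (last w (p ++ q)) t.
  move: qP; rewrite rcons_path => /andP[_ /orP[//|etl]].
  by move: tS; rewrite (arc_into_source etl lS).
have [a [b [aM bM [P [Pshort tP]]]]] := geodetic_oriented t geoM.
have [/andP[PP /eqP Pb] _] := Pshort.
have [s sP [sU sb]] := path_suffix PP (shortest_dpath_uniq Pshort) tP.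
have sS z : z \in t :: s -> z \notin S.
  by move=> zs; apply: contra tS; apply: connect_into_source (path_connect sP zs).
exists w, b; split; [exact: setU11 | apply: outside_mem bM _ | left].
  by rewrite -Pb -sb; apply: sS; exact: mem_last.
rewrite -Pb -sb -(last_rcons w (p ++ q) t) -last_cat.
apply: (upath_sub_interval acyc).
- by rewrite cat_path qP last_rcons (sub_path (@sub_uadj _ e) sP).
- move: sU; rewrite cons_uniq => /andP[ts sU]; rewrite -cat_cons cat_uniq qU sU andbT.
  apply/hasPn => z zs; rewrite -rcons_cons mem_rcons inE negb_or.
  rewrite (contraTneq _ zs) => [|->//]; apply/negP => /qS.
  by apply/negP; apply: sS; rewrite inE zs orbT.
- rewrite last_cat last_rcons; apply: connect_trans (S_strong wS lS) _.
  by apply: connect_trans (connect1 elt) _; apply: (path_connect sP); exact: mem_last.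
- have : x \in w :: p by rewrite -px mem_last.
  by rewrite !inE mem_cat mem_rcons inE mem_cat => /orP[->|->]; rewrite ?orbT.
Qed.

Lemma source_exchange_geodetic : geodetic e N.
Proof.
by move=> x; case: (boolP (x \in S)) => [/exchange_interval_in|/exchange_interval_out].
Qed.

End SourceExchange.

Section Reversal.
Variables (T : finType) (e : rel T).

Lemma uadj_rev : uadj (fun x y => e y x) =2 uadj e.
Proof. by move=> x y; rewrite /uadj orbC. Qed.

Lemma uacyclic_rev : uacyclic e -> uacyclic (fun x y => e y x).
Proof. by move=> acyc c [c3 cU cC]; apply: (acyc c); split; rewrite // -(eq_cycle uadj_rev). Qed.

Lemma leaf_rev v : leaf (fun x y => e y x) v <-> leaf e v.
Proof. by rewrite /leaf /udeg (eq_finset _ (uadj_rev v)). Qed.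

Lemma in_interval_rev a b x : in_interval e a b x -> in_interval (fun x y => e y x) b a x.
Proof.
case=> p [[pw pmin] xp]; exists (rev (belast a p)); split; first split.
- exact: dwalk_rev.
- by move=> q /dwalk_rev/pmin; rewrite !size_rev !size_belast.
- by move: pw xp => /andP[_ /eqP <-]; rewrite lastI mem_rcons !inE mem_rev.
Qed.

Lemma geodetic_rev (N : {set T}) : geodetic e N -> geodetic (fun x y => e y x) N.
Proof.
move=> geo x; have [a [b [aN bN ab]]] := geo x; exists a, b; split=> //.
by case: ab => /in_interval_rev; [right | left].
Qed.

End Reversal.

Lemma card_exchange (T : finType) (M : {set T}) u w : u \in M -> #|w |: (M :\ u)| <= #|M|.
Proof. by move=> uM; rewrite cardsU1 (cardsD1 u M) uM add1n; case: (w \notin _). Qed.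

Theorem lemma4 (T : finType) (e : rel T) (S M : {set T}) (u w : T) :
  loopless e -> ditree e ->
  (source_set e S \/ sink_set e S) ->
  2 <= #|S| ->
  (forall x, x \in S -> ~ leaf e x) ->
  min_geodetic e M ->
  M :&: S = [set u] ->
  w \in S ->
  min_geodetic e (w |: (M :\ u)).
Proof.
move=> e_irr [_ _ acyc] S_source_or_sink _ S_noleaf [geoM minM] MS wS.
have uM : u \in M by have := set11 u; rewrite -MS => /setIP[].
split=> [|M' /minM]; last exact/leq_trans/card_exchange.
case: S_source_or_sink => [[[_ S_strong _] S_no_in] | [[_ S_strong _] S_no_out]].
  exact: (source_exchange_geodetic e_irr acyc S_strong S_no_in S_noleaf geoM MS wS).
apply: geodetic_rev.
apply: (@source_exchange_geodetic _ (fun x y => e y x) S M u w e_irr (uacyclic_rev acyc) _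
  S_no_out _ (geodetic_rev geoM) MS wS).
- by move=> x y xS yS; exact: etrans (connect_rev e x y) (S_strong y x yS xS).
- by move=> v /S_noleaf; rewrite leaf_rev.
Qed.
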